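(* Let $A$ be an AUF algebra, let $M\in\mathrm{Coh}_{\mathrm L}(A)$, let $B=\mathrm{End}_{A,-}(M)^{\mathrm{op}}$ (a finite-dimensional unital algebra acting on $M$ on the right), and let $p\in B$ be an idempotent. Consider the statements: (1) As coherent left $A$-modules, $Mp$ generates $M$, i.e. $M$ is a quotient of $(Mp)^{\oplus n}$ for some $n\ge1$; (2) $p$ is a generating idempotent of $B$. Then (2) implies (1). If $M$ is projective as a left $A$-module, then (1) and (2) are equivalent.
   Context: All algebras are associative $\mathbb C$-algebras, not necessarily unital. An idempotent is $e$ with $e^2=e$. An algebra $A$ is AUF if there is a family $(e_i)_{i\in\mathfrak I}$ of mutually orthogonal idempotents with $\dim e_iAe_j<\infty$ and $A=\sum_{i,j}e_iAe_j$. A left $A$-module $M$ is quasicoherent if $\xi\in A\xi$ for all $\xi\in M$, coherent if moreover finitely generated; $\mathrm{Coh}_{\mathrm L}(A)$ is the category of coherent left $A$-modules. $B=\mathrm{End}_{A,-}(M)^{\mathrm{op}}$ is the algebra of left $A$-module endomorphisms of $M$ with opposite multiplication, acting on the right by $\xi\cdot T=T(\xi)$; $Mp=\{\xi p:\xi\in M\}$ is a left $A$-submodule. Irreducible means nonzero with no nonzero proper submodules. For an AUF algebra $C$ (e.g. a finite-dimensional unital algebra), an idempotent $q\in C$ is generating if every irreducible quasicoherent left $C$-module is a quotient of $Cq$. *)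

From HB Require Import structures.
From mathcomp Require Import all_boot all_algebra.
From mathcomp Require Import complex Rstruct.
Set Implicit Arguments. Unset Strict Implicit. Unset Printing Implicit Defensive.
Import GRing.Theory.
Local Open Scope ring_scope.

Definition CC : numClosedFieldType := (Rdefinitions.R)[i].

Record algebra := Algebra {
  acar :> lmodType CC;
  amul : acar -> acar -> acar;
  amulDl : forall a b c, amul (a + b) c = amul a c + amul b c;
  amulDr : forall a b c, amul a (b + c) = amul a b + amul a c;
  amulZl : forall (k : CC) a b, amul (k *: a) b = k *: amul a b;
  amulZr : forall (k : CC) a b, amul a (k *: b) = k *: amul a b;
  amulA : forall a b c, amul a (amul b c) = amul (amul a b) c
}.

Definition idempotent (A : algebra) (e : A) := amul e e = e.

Definition fin_dim_set (V : lmodType CC) (S : V -> Prop) :=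
  exists s : seq V, forall v, S v ->
    exists c : 'I_(size s) -> CC, v = \sum_(k < size s) c k *: s`_k.

Definition AUF (A : algebra) :=
  exists (I : Type) (e : I -> A),
    (forall i, idempotent (e i)) /\
    (forall i j, i <> j -> amul (e i) (e j) = 0) /\
    (forall i j, fin_dim_set (fun x : A => exists a, x = amul (amul (e i) a) (e j))) /\
    (forall a : A, exists s : seq (I * I * A),
        a = \sum_(t <- s) amul (amul (e t.1.1) t.2) (e t.1.2)).

Record lmod (A : algebra) := LMod {
  mcar :> lmodType CC;
  act : A -> mcar -> mcar;
  actDl : forall a b v, act (a + b) v = act a v + act b v;
  actDr : forall a v w, act a (v + w) = act a v + act a w;
  actZl : forall (k : CC) a v, act (k *: a) v = k *: act a v;
  actZr : forall (k : CC) a v, act a (k *: v) = k *: act a v;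
  actA : forall a b v, act (amul a b) v = act a (act b v)
}.
Arguments act {A} _ _ _.

Definition quasicoherent (A : algebra) (M : lmod A) :=
  forall xi : M, exists a : A, act M a xi = xi.

Definition submodule (A : algebra) (M : lmod A) (S : M -> Prop) :=
  [/\ S 0, (forall x y, S x -> S y -> S (x + y)),
      (forall (k : CC) x, S x -> S (k *: x)) &
      (forall a x, S x -> S (act M a x))].

Definition fin_generated (A : algebra) (M : lmod A) :=
  exists s : seq M, forall S : M -> Prop, submodule S ->
    (forall x, x \in s -> S x) -> forall m, S m.

Definition coherent (A : algebra) (M : lmod A) :=
  quasicoherent M /\ fin_generated M.

Definition Alinear (A : algebra) (M N : lmod A) (f : M -> N) :=
  [/\ (forall x y, f (x + y) = f x + f y),
      (forall (k : CC) x, f (k *: x) = k *: f x) &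
      (forall a x, f (act M a x) = act N a (f x))].

(* A-linear maps defined on an A-submodule S of M (values outside S irrelevant) *)
Definition Alinear_on (A : algebra) (M N : lmod A) (S : M -> Prop) (f : M -> N) :=
  [/\ (forall x y, S x -> S y -> f (x + y) = f x + f y),
      (forall (k : CC) x, S x -> f (k *: x) = k *: f x) &
      (forall a x, S x -> f (act M a x) = act N a (f x))].

Definition projective_coh (A : algebra) (M : lmod A) :=
  forall (V W : lmod A) (pi : V -> W) (f : M -> W),
    coherent V -> coherent W -> Alinear pi -> (forall w, exists v, pi v = w) ->
    Alinear f -> exists g : M -> V, Alinear g /\ forall x, pi (g x) = f x.

(* ---------- B = End_{A,-}(M)^op ----------
   Elements of B are the A-linear maps T : M -> M; B acts on M on the right by
   xi . T = T xi, so the product in B is  S . T = T \o S  (opposite algebra). *)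
Definition inB (A : algebra) (M : lmod A) (T : M -> M) := Alinear (M:=M) (N:=M) T.

Definition addB (A : algebra) (M : lmod A) (S T : M -> M) : M -> M := fun x => S x + T x.
Definition scaleB (A : algebra) (M : lmod A) (k : CC) (T : M -> M) : M -> M := fun x => k *: T x.
Definition mulB (A : algebra) (M : lmod A) (S T : M -> M) : M -> M := fun x => T (S x).

Definition imgp (A : algebra) (M : lmod A) (p : M -> M) (xi : M) := exists eta, xi = p eta.

(* Statement (1): M is a quotient of (Mp)^{oplus n} for some n >= 1.  An A-linear
   map (Mp)^{oplus n} -> M is a family (f_k)_{k<n} of A-linear maps Mp -> M,
   acting as (x_k)_k |-> sum_k f_k x_k; we require it to be surjective. *)
Definition Mp_generates (A : algebra) (M : lmod A) (p : M -> M) :=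
  exists n : nat, (1 <= n)%N /\
    exists f : 'I_n -> M -> M, (forall k, Alinear_on (imgp p) (f k)) /\
      forall m : M, exists x : 'I_n -> M,
        (forall k, imgp p (x k)) /\ m = \sum_(k < n) f k (x k).

(* Left B-modules: a C-vector space N with an action of B satisfying the module axioms
   (the action is only constrained on elements of B, i.e. A-linear maps). *)
Definition Bmodule (A : algebra) (M : lmod A) (N : lmodType CC) (bact : (M -> M) -> N -> N) :=
  [/\ (forall S T v, inB S -> inB T -> bact (addB S T) v = bact S v + bact T v),
      (forall (k : CC) T v, inB T -> bact (scaleB k T) v = k *: bact T v),
      (forall T v w, inB T -> bact T (v + w) = bact T v + bact T w),
      (forall (k : CC) T v, inB T -> bact T (k *: v) = k *: bact T v) &
      (forall S T v, inB S -> inB T -> bact (mulB S T) v = bact S (bact T v))].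

Definition Bquasicoherent (A : algebra) (M : lmod A) (N : lmodType CC) (bact : (M -> M) -> N -> N) :=
  forall v : N, exists T, inB T /\ bact T v = v.

Definition Bsubmodule (A : algebra) (M : lmod A) (N : lmodType CC) (bact : (M -> M) -> N -> N)
    (S : N -> Prop) :=
  [/\ S 0, (forall x y, S x -> S y -> S (x + y)),
      (forall (k : CC) x, S x -> S (k *: x)) &
      (forall T x, inB T -> S x -> S (bact T x))].

Definition Birreducible (A : algebra) (M : lmod A) (N : lmodType CC) (bact : (M -> M) -> N -> N) :=
  (exists v : N, v <> 0) /\
  forall S : N -> Prop, Bsubmodule bact S -> (exists v, S v /\ v <> 0) -> forall v, S v.

Definition inBp (A : algebra) (M : lmod A) (p : M -> M) (X : M -> M) :=
  exists T, inB T /\ X = mulB T p.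

Definition quotient_of_Bp (A : algebra) (M : lmod A) (p : M -> M) (N : lmodType CC)
    (bact : (M -> M) -> N -> N) :=
  exists g : (M -> M) -> N,
    [/\ (forall X Y, inBp p X -> inBp p Y -> g (addB X Y) = g X + g Y),
        (forall (k : CC) X, inBp p X -> g (scaleB k X) = k *: g X),
        (forall T X, inB T -> inBp p X -> g (mulB T X) = bact T (g X)) &
        (forall v, exists X, inBp p X /\ g X = v)].

Definition generating_idempotent (A : algebra) (M : lmod A) (p : M -> M) :=
  forall (N : lmodType CC) (bact : (M -> M) -> N -> N),
    Bmodule bact -> Bquasicoherent bact -> Birreducible bact -> quotient_of_Bp p bact.

(* Both statements amount to the identity of B lying in the two-sided ideal BpB.
   If id = sum_k b_k p c_k in B, then xi = sum_k c_k (p (b_k xi)) exhibits M as a quotient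
   of (Mp)^n.  Moreover p cannot annihilate an irreducible quasicoherent B-module N (the
   identity would act as 0), and any w with p w <> 0 gives the surjection X |-> X w from
   Bp onto N.  If id is not in BpB, Zorn's lemma yields a maximal left ideal L containing
   BpB; p annihilates the irreducible module B/L, so every B-linear map Bp -> B/L vanishes,
   being determined by the image of p = p p.  Finally, when M is projective and the maps
   f_k : Mp -> M are jointly onto, lifting id_M along x |-> sum_k f_k (p x_k) to
   g : M -> M^n writes id = sum_k g_k p (f_k p), an element of BpB. *)

From HB Require Import structures.
From mathcomp Require Import all_boot all_algebra.
From mathcomp Require Import complex Rstruct.
From mathcomp Require Import boolp classical_sets functions.
From mathcomp Require Import generic_quotient ring_quotient.
Set Implicit Arguments. Unset Strict Implicit. Unset Printing Implicit Defensive.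
Import GRing.Theory.
Local Open Scope ring_scope.
Local Open Scope quotient_scope.
Local Open Scope classical_set_scope.

Section QuotientLmodule.
Variables (R : pzRingType) (V : lmodType R) (I : zmodClosed V).
Hypothesis I_scale : GRing.scaler_closed I.

(* The closedness proof is an argument only so that the lmodType instance below can be
   keyed on [quotlmod I_scale]. *)
Definition quotlmod of GRing.scaler_closed I := Quotient.quot I.
Local Notation Q := (quotlmod I_scale).
HB.instance Definition _ := Choice.on Q.
HB.instance Definition _ := GRing.Zmodule.on Q.
HB.instance Definition _ := EqQuotient.on Q.
HB.instance Definition _ := ZmodQuotient.on Q.

Definition scaleq (a : R) : Q -> Q := lift_op1 Q ( *:%R a).

Lemma pi_scale a : {morph \pi_Q : x / a *: x >-> scaleq a x}.
Proof.
move=> x; unlock scaleq; apply/eqP; rewrite piE Quotient.equivE.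
by rewrite -scalerBr I_scale // Quotient.idealrBE reprK.
Qed.
Canonical pi_scale_morph a := PiMorph1 (pi_scale a).

Lemma scaleqA a b x : scaleq a (scaleq b x) = scaleq (a * b) x.
Proof. by rewrite -[x]reprK !piE scalerA. Qed.
Lemma scale1q : left_id 1 scaleq.
Proof. by move=> x; rewrite -[x]reprK !piE scale1r. Qed.
Lemma scaleqDr : right_distributive scaleq +%R.
Proof. by move=> a x y; rewrite -[x]reprK -[y]reprK !piE scalerDr. Qed.
Lemma scaleqDl x : {morph scaleq^~ x : a b / a + b}.
Proof. by move=> a b; rewrite -[x]reprK !piE scalerDl. Qed.

HB.instance Definition _ :=
  GRing.Zmodule_isLmodule.Build R Q scaleqA scale1q scaleqDr scaleqDl.

Lemma pi_quotlmodZ a x : \pi_Q (a *: x) = a *: \pi_Q x.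
Proof. exact: pi_scale. Qed.

Lemma eq_quotlmodP x y : reflect (\pi_Q x = \pi_Q y) (x - y \in I).
Proof. by rewrite Quotient.idealrBE; apply: eqP. Qed.
End QuotientLmodule.

Section ModuleBasics.
Variables (A : algebra) (M : lmod A).
Local Notation inB := (@inB A M).
Implicit Types S T : M -> M.

Lemma act0r a : act M a 0 = 0.
Proof. by apply: (addrI (act M a 0)); rewrite -actDr !addr0. Qed.
Lemma act0l v : act M 0 v = 0.
Proof. by apply: (addrI (act M 0 v)); rewrite -actDl !addr0. Qed.
Lemma actNl a v : act M (- a) v = - act M a v.
Proof. by apply/eqP; rewrite -addr_eq0 -actDl addNr act0l. Qed.
Lemma actBr a v w : act M a (v - w) = act M a v - act M a w.
Proof. by apply: (addIr (act M a w)); rewrite -actDr !subrK. Qed.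
Lemma actBl a b v : act M (a - b) v = act M a v - act M b v.
Proof. by rewrite actDl actNl. Qed.
Lemma act_sum a I (r : seq I) (P : pred I) (F : I -> M) :
  act M a (\sum_(i <- r | P i) F i) = \sum_(i <- r | P i) act M a (F i).
Proof. exact: (big_morph _ (actDr a) (act0r a)). Qed.

Lemma inB_id : inB idfun.
Proof. by []. Qed.
Lemma inB0 : inB 0.
Proof. by split=> *; rewrite /= ?addr0 ?scaler0 ?act0r. Qed.
Lemma inB_add S T : inB S -> inB T -> inB (S + T).
Proof.
case=> SD SZ SA [TD TZ TA]; split=> * /=; rewrite ?addrfctE ?scalrfctE /=.
- by rewrite SD TD addrACA.
- by rewrite SZ TZ scalerDr.
- by rewrite SA TA actDr.
Qed.
Lemma inB_scale k T : inB T -> inB (k *: T).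
Proof.
case=> TD TZ TA; split=> * /=; rewrite ?scalrfctE /=.
- by rewrite TD scalerDr.
- by rewrite TZ !scalerA mulrC.
- by rewrite TA actZr.
Qed.
Lemma inB_mul S T : inB S -> inB T -> inB (mulB S T).
Proof.
by case=> SD SZ SA [TD TZ TA]; split=> *; rewrite /mulB ?SD ?TD ?SZ ?TZ ?SA ?TA.
Qed.

Lemma inB_map0 T : inB T -> T 0 = 0.
Proof. by case=> TD _ _; apply: (addrI (T 0)); rewrite -TD !addr0. Qed.

Lemma inB_sum I (r : seq I) (P : pred I) (F : I -> M -> M) :
  (forall i, P i -> inB (F i)) -> inB (\sum_(i <- r | P i) F i).
Proof. by move=> hF; apply: big_ind => //; [apply: inB0 | apply: inB_add]. Qed.

End ModuleBasics.
Arguments inB_id {A M}.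
Arguments inB0 {A M}.

Section PowerModule.
Variables (A : algebra) (M : lmod A) (n : nat).

Definition pow_act (a : A) (x : {ffun 'I_n -> M}) : {ffun 'I_n -> M} :=
  [ffun k => act M a (x k)].

Lemma pow_actDl a b x : pow_act (a + b) x = pow_act a x + pow_act b x.
Proof. by apply/ffunP => k; rewrite !ffunE actDl. Qed.
Lemma pow_actDr a x y : pow_act a (x + y) = pow_act a x + pow_act a y.
Proof. by apply/ffunP => k; rewrite !ffunE actDr. Qed.
Lemma pow_actZl c a x : pow_act (c *: a) x = c *: pow_act a x.
Proof. by apply/ffunP => k; rewrite !ffunE actZl. Qed.
Lemma pow_actZr c a x : pow_act a (c *: x) = c *: pow_act a x.
Proof. by apply/ffunP => k; rewrite !ffunE actZr. Qed.
Lemma pow_actA a b x : pow_act (amul a b) x = pow_act a (pow_act b x).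
Proof. by apply/ffunP => k; rewrite !ffunE actA. Qed.

Definition pow_lmod : lmod A := LMod pow_actDl pow_actDr pow_actZl pow_actZr pow_actA.

Lemma quasicoherent_local_unit : quasicoherent M ->
  forall s : seq M, exists a, {in s, forall x, act M a x = x}.
Proof.
move=> qc; elim=> [|x s [e he]]; first by exists 0.
have [b hb] := qc (x - act M e x).
(* [e + b - b e] still fixes what [e] fixes, and fixes [x] because [b] fixes [x - e x]. *)
exists (e + b - amul b e) => y; rewrite inE => /predU1P[->|ys].
  by rewrite actBl !actDl actA -addrA -actBr hb addrC subrK.
by rewrite actBl !actDl actA he // addrK.
Qed.

Lemma coherent_pow : coherent M -> coherent pow_lmod.
Proof.
case=> qc [s hs]; split.
  move=> x; have [a ha] := quasicoherent_local_unit qc [seq x k | k <- enum 'I_n].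
  by exists a; apply/ffunP => k; rewrite ffunE ha // map_f ?mem_enum.
pose delta k (m : M) : pow_lmod := [ffun j => if j == k then m else 0].
exists [seq delta k m | k <- enum 'I_n, m <- s] => S [S0 SD SZ SA] hS x.
have Sdelta k m : S (delta k m).
  apply: (hs (fun m => S (delta k m))) => [|m' m's]; last first.
    by apply: hS; apply/allpairsP; exists (k, m'); rewrite mem_enum.
  split=> [|m1 m2|c m1|a m1].
  - by have -> : delta k 0 = 0 by apply/ffunP => j; rewrite !ffunE if_same.
  - have -> : delta k (m1 + m2) = delta k m1 + delta k m2.
      by apply/ffunP => j; rewrite !ffunE; case: ifP; rewrite ?addr0.
    exact: SD.
  - have -> : delta k (c *: m1) = c *: delta k m1.
      by apply/ffunP => j; rewrite !ffunE; case: ifP; rewrite ?scaler0.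
    exact: SZ.
  - have -> : delta k (act M a m1) = act pow_lmod a (delta k m1).
      by apply/ffunP => j; rewrite /= !ffunE; case: ifP; rewrite ?act0r.
    exact: SA.
have -> : x = \sum_(k < n) delta k (x k).
  apply/ffunP => j; rewrite sum_ffunE (bigD1 j) //= ffunE eqxx big1 ?addr0 //.
  by move=> i /negbTE ij; rewrite ffunE eq_sym ij.
by apply: big_ind.
Qed.

End PowerModule.

Section Endomorphisms.
Variables (A : algebra) (M : lmod A).
Local Notation inB := (@inB A M).

Definition inB_pred : {pred M -> M} := fun T => `[< inB T >].

Lemma inB_submod_closed : GRing.submod_closed inB_pred.
Proof.
split=> [|k S T /asboolP hS /asboolP hT]; apply/asboolP; first exact: inB0.
exact/inB_add/hT/inB_scale.
Qed.

HB.instance Definition _ := GRing.isSubmodClosed.Build CC (M -> M) inB_pred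
  (GRing.submod_closed_semi inB_submod_closed).

Record endo := Endo { endo_fun :> M -> M; _ : endo_fun \in inB_pred }.
HB.instance Definition _ := [isSub for endo_fun].
HB.instance Definition _ := [Choice of endo by <:].
HB.instance Definition _ := [SubChoice_isSubLmodule of endo by <:].

Lemma endoP (X : endo) : inB X.
Proof. exact: (asboolW (valP X)). Qed.

End Endomorphisms.

Section LeftIdeals.
Variables (A : algebra) (M : lmod A).
Local Notation inB := (@inB A M).

Definition left_ideal (L : set (M -> M)) :=
  [/\ L `<=` inB, L 0, (forall X Y, L X -> L Y -> L (X + Y)),
      (forall k X, L X -> L (k *: X)) & (forall T X, inB T -> L X -> L (mulB T X))].

Lemma left_ideal_chain_union (J : set (M -> M)) (F : set (set (M -> M))) :
  left_ideal J -> (forall S, F S -> left_ideal (J `|` S)) -> total_on F subset ->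
  left_ideal (J `|` \bigcup_(S in F) S).
Proof.
move=> hJ hF Ftot; set U := \bigcup_(S in F) S.
pose Q S := S = set0 \/ F S.
have QL S : Q S -> left_ideal (J `|` S) by case=> [->|/hF//]; rewrite setU0.
have QU S : Q S -> J `|` S `<=` J `|` U.
  case=> [->|FS]; first by rewrite setU0; apply: subsetUl.
  by apply: setUS; apply: bigcup_sup.
have common X Y : (J `|` U) X -> (J `|` U) Y ->
    exists2 S, Q S & (J `|` S) X /\ (J `|` S) Y.
  case=> [JX|[S1 FS1 S1X]] [JY|[S2 FS2 S2Y]].
  - by exists set0; [left | split; left].
  - by exists S2; [right | split; [left | right]].
  - by exists S1; [right | split; [right | left]].
  - have [S12|S21] := Ftot _ _ FS1 FS2.
      by exists S2; [right | split; right; [apply: S12 |]].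
    by exists S1; [right | split; right; [|apply: S21]].
have single X : (J `|` U) X -> exists2 S, Q S & (J `|` S) X.
  by move=> hX; have [S QS [hXS _]] := common X X hX hX; exists S.
split.
- by move=> X /single [S /QL [hS _ _ _ _] /hS].
- by left; case: hJ.
- move=> X Y hX hY; have [S QS [hXS hYS]] := common X Y hX hY.
  by apply: (QU S QS); have [_ _ hD _ _] := QL S QS; apply: hD.
- move=> k X /single [S QS hX].
  by apply: (QU S QS); have [_ _ _ hZ _] := QL S QS; apply: hZ.
- move=> T X hT /single [S QS hX].
  by apply: (QU S QS); have [_ _ _ _ hM] := QL S QS; apply: hM.
Qed.

Definition maximal_left_ideal (L : set (M -> M)) :=
  [/\ left_ideal L, ~ L idfun &
    forall L', left_ideal L' -> L `<=` L' -> ~ L' idfun -> L' `<=` L].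

Lemma exists_maximal_left_ideal (J : set (M -> M)) : left_ideal J -> ~ J idfun ->
  exists2 L, maximal_left_ideal L & J `<=` L.
Proof.
(* Adjoining [J] keeps the union of the empty chain, [set0], admissible for [Zorn_bigcup]. *)
move=> hJ nJ; pose P S := left_ideal (J `|` S) /\ ~ (J `|` S) idfun.
have [S [[hS nS] Smax]] : exists S, P S /\ forall S', S `<` S' -> ~ P S'.
  apply: Zorn_bigcup => F FP Ftot; split.
    by apply: left_ideal_chain_union => // S /FP[].
  by case=> [//|[S FS hS]]; case: (FP S FS) => _; apply; right.
exists (J `|` S); last by move=> X; left.
split=> // L' hL' JSL' nL' X L'X.
apply: contrapT => nX; apply: (Smax L'); last first.
  by rewrite /P setUidr // => Y JY; apply: JSL'; left.
split; first by move=> Y SY; apply: JSL'; right.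
by move=> /(_ X L'X) SX; apply: nX; right.
Qed.

End LeftIdeals.

Section QuotientByLeftIdeal.
Variables (A : algebra) (M : lmod A) (L : set (M -> M)).
Hypothesis hL : left_ideal L.
Local Notation inB := (@inB A M).

(* The unused argument puts [hL] into the key of the zmodClosed instance. *)
Definition in_ideal of left_ideal L : {pred endo M} := fun X => `[< L (val X) >].

Lemma in_ideal_zmod_closed : GRing.zmod_closed (in_ideal hL).
Proof.
have [_ L0 LD LZ _] := hL.
split=> [|X Y /asboolP LX /asboolP LY]; apply/asboolP; first exact: L0.
by rewrite GRing.valB; apply: LD => //; rewrite -scaleN1r; apply: LZ.
Qed.
HB.instance Definition _ :=
  GRing.isZmodClosed.Build (endo M) (in_ideal hL) in_ideal_zmod_closed.

Lemma in_ideal_scaler_closed : GRing.scaler_closed (in_ideal hL).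
Proof.
have [_ _ _ LZ _] := hL; move=> k X /asboolP LX; apply/asboolP.
by rewrite GRing.valZ; apply: LZ.
Qed.

Definition quot_ideal := quotlmod in_ideal_scaler_closed.

Lemma quot_ideal_eqP X Y : \pi_quot_ideal X = \pi_quot_ideal Y <-> L (val X - val Y).
Proof.
rewrite -GRing.valB; split=> [/eq_quotlmodP/asboolP // | h].
exact/eq_quotlmodP/asboolP.
Qed.

Lemma quot_ideal_eq0 X : \pi_quot_ideal X = 0 <-> L (val X).
Proof. by rewrite -(raddf0 \pi_quot_ideal) quot_ideal_eqP GRing.val0 subr0. Qed.

Definition endo_of (X : M -> M) : endo M := insubd 0 X.

Lemma endo_ofK X : inB X -> val (endo_of X) = X.
Proof. by move=> hX; rewrite val_insubd ifT //; apply/asboolP. Qed.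

Definition endo_mul (T : M -> M) (X : endo M) : endo M := endo_of (mulB T (val X)).

Lemma endo_mulE T (X : endo M) : inB T -> val (endo_mul T X) = mulB T (val X).
Proof. by move=> hT; apply/endo_ofK/inB_mul/endoP. Qed.

Lemma endo_mulDl S T X :
  inB S -> inB T -> endo_mul (S + T) X = endo_mul S X + endo_mul T X.
Proof.
move=> hS hT; apply: val_inj; rewrite GRing.valD (endo_mulE _ (inB_add hS hT)).
by rewrite !endo_mulE //; apply/funext => x; have [XD _ _] := endoP X; apply: XD.
Qed.

Lemma endo_mulZl k T X : inB T -> endo_mul (k *: T) X = k *: endo_mul T X.
Proof.
move=> hT; apply: val_inj; rewrite GRing.valZ (endo_mulE _ (inB_scale k hT)).
by rewrite !endo_mulE //; apply/funext => x; have [_ XZ _] := endoP X; apply: XZ.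
Qed.

Lemma endo_mulDr T X Y : inB T -> endo_mul T (X + Y) = endo_mul T X + endo_mul T Y.
Proof. by move=> hT; apply: val_inj; rewrite GRing.valD !endo_mulE // GRing.valD. Qed.

Lemma endo_mulZr k T X : inB T -> endo_mul T (k *: X) = k *: endo_mul T X.
Proof. by move=> hT; apply: val_inj; rewrite GRing.valZ !endo_mulE // GRing.valZ. Qed.

Lemma endo_mulA S T X :
  inB S -> inB T -> endo_mul (mulB S T) X = endo_mul S (endo_mul T X).
Proof.
by move=> hS hT; apply: val_inj; rewrite (endo_mulE _ (inB_mul hS hT)) !endo_mulE.
Qed.

Lemma endo_mul1 X : endo_mul idfun X = X.
Proof. by apply: val_inj; rewrite endo_mulE //; apply: inB_id. Qed.

Definition quot_act (T : M -> M) (v : quot_ideal) : quot_ideal :=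
  \pi_quot_ideal (endo_mul T (repr v)).

Lemma quot_act_pi T X : inB T -> quot_act T (\pi X) = \pi_quot_ideal (endo_mul T X).
Proof.
move=> hT; apply/quot_ideal_eqP; rewrite !endo_mulE //.
have [_ _ _ _ LM] := hL; apply: (LM _ (val (repr (\pi_quot_ideal X)) - val X) hT).
by apply/quot_ideal_eqP; rewrite reprK.
Qed.

Lemma quot_act_Bmodule : Bmodule quot_act.
Proof.
split.
- move=> S T v hS hT; rewrite -[v]reprK !quot_act_pi //; last exact: inB_add.
  by rewrite (endo_mulDl _ hS hT) raddfD.
- move=> k T v hT; rewrite -[v]reprK !quot_act_pi //; last exact: inB_scale.
  by rewrite (endo_mulZl _ _ hT) pi_quotlmodZ.
- move=> T v w hT; rewrite -[v]reprK -[w]reprK -raddfD.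
  by rewrite !quot_act_pi // endo_mulDr // raddfD.
- move=> k T v hT; rewrite -[v]reprK -pi_quotlmodZ.
  by rewrite !quot_act_pi // endo_mulZr // pi_quotlmodZ.
- move=> S T v hS hT; rewrite -[v]reprK !quot_act_pi //; last exact: inB_mul.
  by rewrite (endo_mulA _ hS hT).
Qed.

Lemma quot_act_quasicoherent : Bquasicoherent quot_act.
Proof.
move=> v; exists idfun; split; first exact: inB_id.
by rewrite -[v]reprK quot_act_pi ?endo_mul1 //; apply: inB_id.
Qed.

Definition quot_preimage (S : quot_ideal -> Prop) : set (M -> M) :=
  fun X => exists2 E : endo M, val E = X & S (\pi_quot_ideal E).

Lemma left_ideal_quot_preimage S : Bsubmodule quot_act S -> left_ideal (quot_preimage S).
Proof.
case=> S0 SD SZ SA; split.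
- by move=> X [E <- _]; apply: endoP.
- by exists 0; rewrite ?GRing.val0 ?raddf0.
- move=> X Y [E <- SE] [F <- SF]; exists (E + F); first exact: GRing.valD.
  by rewrite raddfD; apply: SD.
- move=> k X [E <- SE]; exists (k *: E); first exact: GRing.valZ.
  by rewrite pi_quotlmodZ; apply: SZ.
- move=> T X hT [E <- SE]; exists (endo_mul T E); first exact: endo_mulE.
  by rewrite -quot_act_pi //; apply: SA.
Qed.

Lemma quot_ideal_id_neq0 : ~ L idfun -> \pi_quot_ideal (endo_of idfun) <> 0.
Proof. by move=> nL /quot_ideal_eq0; rewrite endo_ofK //; apply: inB_id. Qed.

Lemma quot_act_irreducible : maximal_left_ideal L -> Birreducible quot_act.
Proof.
case=> _ nL Lmax; split.
  by exists (\pi_quot_ideal (endo_of idfun)); apply: quot_ideal_id_neq0.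
move=> S hS [v0 [Sv0 v0_neq0]]; have [LinB _ _ _ _] := hL.
have LS : L `<=` quot_preimage S.
  move=> X LX; exists (endo_of X); first exact/endo_ofK/LinB.
  rewrite (proj2 (quot_ideal_eq0 _)); first by case: hS.
  by rewrite endo_ofK //; apply: LinB.
have [E Eid SE] : quot_preimage S idfun.
  apply: contrapT => nS; apply: v0_neq0; rewrite -[v0]reprK; apply/quot_ideal_eq0.
  by apply: (Lmax _ (left_ideal_quot_preimage hS) LS nS); exists (repr v0); rewrite ?reprK.
move=> w; rewrite -[w]reprK.
have -> : repr w = endo_mul (val (repr w)) E.
  by apply: val_inj; rewrite endo_mulE ?Eid //; apply: endoP.
case: hS => _ _ _ SA; rewrite -quot_act_pi; last exact: endoP.
by apply: SA SE; apply: endoP.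
Qed.

End QuotientByLeftIdeal.

Section BModules.
Variables (A : algebra) (M : lmod A) (N : lmodType CC) (bact : (M -> M) -> N -> N).
Hypothesis hB : Bmodule bact.
Local Notation inB := (@inB A M).

Lemma bactr0 T : inB T -> bact T 0 = 0.
Proof.
by case: hB => _ _ hD _ _ hT; apply: (addrI (bact T 0)); rewrite -hD // !addr0.
Qed.

Lemma bact0 v : bact 0 v = 0.
Proof.
case: hB => hD _ _ _ _; apply: (addrI (bact 0 v)).
rewrite addr0 -hD; try exact: inB0.
by congr bact; apply/funext => x; apply: addr0.
Qed.

Lemma bact_sum I (r : seq I) (P : pred I) (F : I -> M -> M) v :
  (forall i, P i -> inB (F i)) ->
  bact (\sum_(i <- r | P i) F i) v = \sum_(i <- r | P i) bact (F i) v.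
Proof.
move=> hF; elim: r => [|i r IHr]; first by rewrite !big_nil bact0.
rewrite !big_cons; case: ifP => // Pi; rewrite -IHr.
by case: hB => hD _ _ _ _; apply: hD; [apply: hF | apply: inB_sum].
Qed.

End BModules.

Section IdempotentIdeals.
Variables (A : algebra) (M : lmod A) (p : M -> M).
Hypotheses (hp : inB p) (pp : forall x, p (p x) = p x).
Local Notation inB := (@inB A M).

Lemma left_ideal_Bp : left_ideal (inBp p).
Proof.
have [pD pZ _] := hp; split.
- by move=> _ [T [hT ->]]; apply: inB_mul.
- exists 0; split; first exact: inB0.
  by apply/funext => x; rewrite /mulB inB_map0.
- move=> _ _ [S [hS ->]] [T [hT ->]]; exists (S + T); split; first exact: inB_add.
  by apply/funext => x; rewrite /mulB pD.
- move=> k _ [T [hT ->]]; exists (k *: T); split; first exact: inB_scale.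
  by apply/funext => x; rewrite /mulB pZ.
- move=> S _ hS [T [hT ->]]; exists (mulB S T); split=> //; exact: inB_mul.
Qed.

(* [mulB (mulB b p) c] is the product [b p c] of B, i.e. the map [c \o p \o b]. *)
Definition inBpB (X : M -> M) := exists2 s : seq ((M -> M) * (M -> M)),
  {in s, forall bc, inB bc.1 /\ inB bc.2} & X = \sum_(bc <- s) mulB (mulB bc.1 p) bc.2.

Lemma left_ideal_BpB : left_ideal inBpB.
Proof.
split.
- move=> _ [s hs ->]; rewrite big_seq; apply: inB_sum => bc /hs[h1 h2].
  by apply/inB_mul/h2/inB_mul.
- by exists [::]; rewrite ?big_nil.
- move=> _ _ [s hs ->] [t ht ->]; exists (s ++ t); last by rewrite big_cat.
  by move=> bc; rewrite mem_cat => /orP[/hs|/ht].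
- move=> k _ [s hs ->]; exists [seq (bc.1, k *: bc.2) | bc <- s].
    by move=> _ /mapP[bc /hs[h1 h2] ->]; split; last apply: inB_scale.
  by rewrite big_map scaler_sumr.
- move=> T _ hT [s hs ->]; exists [seq (mulB T bc.1, bc.2) | bc <- s].
    by move=> _ /mapP[bc /hs[h1 h2] ->]; split; first apply: inB_mul.
  by rewrite big_map; apply/funext => x; rewrite /mulB !fct_sumE.
Qed.

Lemma quot_act_p_eq0 L (hL : left_ideal L) (v : quot_ideal hL) :
  inBpB `<=` L -> quot_act p v = 0.
Proof.
move=> BpBL; rewrite -[v]reprK quot_act_pi //; apply/quot_ideal_eq0.
rewrite endo_mulE //; apply: BpBL; exists [:: (idfun, val (repr v))]; last by rewrite big_seq1.
by move=> bc; rewrite inE => /eqP ->; split; [apply: inB_id | apply: endoP].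
Qed.

Lemma quotient_of_Bp_cyclic (N : lmodType CC) (bact : (M -> M) -> N -> N) w :
  Bmodule bact -> Birreducible bact -> bact p w <> 0 -> quotient_of_Bp p bact.
Proof.
move=> hB [_ irr] pw_neq0; have [hD hZ _ _ hM] := hB.
have [BpB Bp0 BpD BpZ BpM] := left_ideal_Bp.
exists (fun X => bact X w); split.
- by move=> X Y /BpB hX /BpB hY; apply: hD.
- by move=> k X /BpB hX; apply: hZ.
- by move=> T X hT /BpB hX; apply: hM.
pose S v := exists X, inBp p X /\ bact X w = v.
apply: (irr S); last first.
  exists (bact p w); split=> //; exists p; split=> //.
  by exists idfun; split=> //; apply: inB_id.
split.
- by exists 0; rewrite bact0.
- move=> _ _ [X [hX <-]] [Y [hY <-]]; exists (X + Y).
  by split; [apply: BpD | apply: hD; apply: BpB].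
- move=> k _ [X [hX <-]]; exists (k *: X).
  by split; [apply: BpZ | apply: hZ; apply: BpB].
- move=> T _ hT [X [hX <-]]; exists (mulB T X).
  by split; [apply: BpM | apply: hM; [| apply: BpB]].
Qed.

Lemma quotient_of_Bp_annihilated_eq0 (N : lmodType CC) (bact : (M -> M) -> N -> N) :
  Bmodule bact -> (forall v, bact p v = 0) -> quotient_of_Bp p bact -> forall v : N, v = 0.
Proof.
move=> hB p0 [g [_ _ gM gsurj]] v.
have Bp_p : inBp p p by exists idfun; split=> //; apply: inB_id.
have gp0 : g p = 0.
  have pp_fun : mulB p p = p by apply/funext => x; rewrite /mulB pp.
  by rewrite -pp_fun gM.
have [_ [[T [hT ->]] <-]] := gsurj v.
by rewrite gM // gp0 bactr0.
Qed.

Lemma generating_of_BpB : inBpB idfun -> generating_idempotent p.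
Proof.
move=> [s hs id_sum] N bact hB hq hirr.
have [[w pw_neq0]|p0] := pselect (exists w, bact p w <> 0).
  exact: quotient_of_Bp_cyclic hB hirr pw_neq0.
have {}p0 w : bact p w = 0 by apply: contrapT => ?; apply: p0; exists w.
have id0 u : bact idfun u = 0.
  have [_ _ _ _ hM] := hB.
  rewrite id_sum big_seq (bact_sum hB) => [|bc /hs[h1 h2]]; last exact/inB_mul/h2/inB_mul.
  apply: big1 => -[b c] /hs[/= hb hc].
  by rewrite (hM _ _ _ (inB_mul hb hp) hc) (hM _ _ _ hb hp) p0 (bactr0 hB hb).
have [u u_neq0] := hirr.1; exfalso; apply: u_neq0.
have [T [hT <-]] := hq u.
have [_ _ _ _ hM] := hB.
by rewrite -[T]/(mulB T idfun) (hM _ _ _ hT inB_id) id0 (bactr0 hB hT).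
Qed.

Lemma BpB_of_generating : generating_idempotent p -> inBpB idfun.
Proof.
move=> gen; apply: contrapT => nBpB.
have [L maxL BpBL] := exists_maximal_left_ideal left_ideal_BpB nBpB.
have [hL nL _] := maxL.
have := gen _ _ (quot_act_Bmodule hL) (@quot_act_quasicoherent _ _ _ hL)
  (quot_act_irreducible hL maxL).
move/(quotient_of_Bp_annihilated_eq0 (quot_act_Bmodule hL) (fun v => quot_act_p_eq0 v BpBL)).
by move/(_ (\pi_(quot_ideal hL) (endo_of idfun))); apply: quot_ideal_id_neq0.
Qed.

Lemma generating_idempotentP : generating_idempotent p <-> inBpB idfun.
Proof. by split; [apply: BpB_of_generating | apply: generating_of_BpB]. Qed.

Lemma Mp_generates_of_BpB : inBpB idfun -> Mp_generates p.
Proof.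
case=> s hs id_sum; pose bc0 : (M -> M) * (M -> M) := (0, 0).
have hnth k : inB (nth bc0 s k).1 /\ inB (nth bc0 s k).2.
  have [/(mem_nth bc0)/hs //|/(nth_default bc0) ->] := ltnP k (size s).
  by split; apply: inB0.
exists (size s).+1; split=> //; exists (fun k => (nth bc0 s k).2); split.
  move=> k; have [_ [cD cZ cA]] := hnth k.
  by split=> *; [apply: cD | apply: cZ | apply: cA].
move=> m; exists (fun k => p ((nth bc0 s k).1 m)); split; first by move=> k; eexists.
rewrite big_ord_recr /= nth_default // [bc0.2 _]/= addr0.
by rewrite -[LHS]/(idfun m) id_sum fct_sumE (big_nth bc0) big_mkord.
Qed.

Lemma inB_comp_p (f : M -> M) : Alinear_on (imgp p) f -> inB (fun y => f (p y)).
Proof.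
case=> fD fZ fA; have [pD pZ pA] := hp.
by split=> *; rewrite ?pD ?pZ ?pA; [apply: fD | apply: fZ | apply: fA]; eexists.
Qed.

Lemma BpB_of_Mp_generates :
  coherent M -> projective_coh M -> Mp_generates p -> inBpB idfun.
Proof.
move=> hc hproj [n [_ [f [hf hsurj]]]].
pose F k y := f k (p y); have hF k : inB (F k) := inB_comp_p (hf k).
pose pi (x : pow_lmod M n) := \sum_(k < n) F k (x k).
have pi_lin : Alinear pi.
  split=> [x y|c x|a x]; rewrite /pi ?scaler_sumr ?act_sum -?big_split.
  - by apply: eq_bigr => k _ /=; rewrite ffunE; case: (hF k) => FD _ _; apply: FD.
  - by apply: eq_bigr => k _ /=; rewrite ffunE; case: (hF k) => _ FZ _; apply: FZ.
  - by apply: eq_bigr => k _ /=; rewrite ffunE; case: (hF k) => _ _ FA; apply: FA.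
have pi_surj w : exists x, pi x = w.
  have [x [hx ->]] := hsurj w; exists [ffun k => x k].
  by apply: eq_bigr => k _; rewrite ffunE /F; have [e ->] := hx k; rewrite pp.
have [g [hg gK]] := hproj _ _ pi idfun (coherent_pow n hc) hc pi_lin pi_surj inB_id.
exists [seq (fun x => g x k, F k) | k <- index_enum 'I_n].
  move=> _ /mapP[k _ ->]; split; last exact: hF.
  by have [gD gZ gA] := hg; split=> * /=; rewrite ?gD ?gZ ?gA ffunE.
apply: funext => x; rewrite fct_sumE big_map -[LHS](gK x); apply: eq_bigr => k _.
by rewrite /mulB /F /= pp.
Qed.

End IdempotentIdeals.

Theorem theorem7p11 (A : algebra) (M : lmod A) (p : M -> M) :
  AUF A -> coherent M -> inB p -> (forall xi, p (p xi) = p xi) ->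
  (generating_idempotent p -> Mp_generates p) /\
  (projective_coh M -> (Mp_generates p <-> generating_idempotent p)).
Proof.
move=> _ hc hp pp; have genP := generating_idempotentP hp pp.
split=> [/genP/Mp_generates_of_BpB // | hproj].
split=> [/(BpB_of_Mp_generates hp pp hc hproj)/genP // | /genP].
exact: Mp_generates_of_BpB.
Qed.
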